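(* In the single-block Spice setting, suppose that for every $k\ge1$ the scaling factor satisfies $$\eta_k\ \ge\ \max\Big\{\eta_{k-1}\sqrt{\tfrac{\mathsf{R}(x^k)}{\mathsf{R}(x^{k-1})}},\ \ \eta_{k-1}\,\tfrac{\mathsf{R}(\bar x^k)\sqrt{\mathsf{R}(x^{k-1})}}{\mathsf{R}(\bar x^{k-1})\sqrt{\mathsf{R}(x^k)}}\Big\}.$$ Then (i) $r_k\le r_{k-1}$, $s_k\le s_{k-1}$, hence $H_k\preceq H_{k-1}$ for all $k\ge1$; and (ii) if $w^*\in\Omega$ satisfies $\rho[f(x)-f(x^* )]+(w-w^* )^\top\frac{1}{\eta_j}\Gamma(w^* )\ge0$ for all $w\in\Omega$ and all $j=0,\dots,k$, then $\|w^{k+1}-w^*\|_{H_{k+1}}^2\le\|w^0-w^*\|_{H_0}^2$.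
   Context: Single-block Spice setting. Let $\mathcal{X}\subseteq\mathbb{R}^n$ be nonempty closed convex, $f:\mathbb{R}^n\to\mathbb{R}$ convex, $\phi_1,\dots,\phi_p:\mathbb{R}^n\to\mathbb{R}$ convex and continuously differentiable, $\Phi(x)=(\phi_1(x),\dots,\phi_p(x))^\top$, $\mathcal{D}\Phi(x)\in\mathbb{R}^{p\times n}$ its Jacobian. Let $\mathcal{Z}=\mathbb{R}^p_+$, $\Omega=\mathcal{X}\times\mathcal{Z}$, $w=(x,\lambda)$, $\Gamma(w)=(\mathcal{D}\Phi(x)^\top\lambda,\,-\Phi(x))$. For a symmetric matrix $A$, $\|v\|_A^2:=v^\top A v$; the norm of a matrix is the spectral norm; $\mathsf{R}(x):=\|\mathcal{D}\Phi(x)\|^2$. The scaled Lagrangian is $\mathcal{L}(x,\lambda,\rho,\eta)=\rho f(x)+\frac1\eta\lambda^\top\Phi(x)$. Fix $\rho>0$, $\mu>1$, a starting point $w^0=(x^0,\lambda^0)\in\Omega$ and positive numbers $\eta_0,\eta_1,\dots$. Given $w^k=(x^k,\lambda^k)\in\Omega$, iteration $k$ is: $r_k=\frac{1}{\eta_k}\sqrt{\mathsf{R}(x^k)}$; $\bar x^k=\arg\min_{x\in\mathcal{X}}\{\mathcal{L}(x,\lambda^k,\rho,\eta_k)+\frac{r_k}{2}\|x-x^k\|^2\}$; $s_k=\frac{\mu\,\mathsf{R}(\bar x^k)}{\eta_k\sqrt{\mathsf{R}(x^k)}}$; $\bar\lambda^k=\arg\max_{\lambda\in\mathcal{Z}}\{\mathcal{L}(\bar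 x^k,\lambda,\rho,\eta_k)-\frac{s_k}{2}\|\lambda-\lambda^k\|^2\}$ (equivalently $\bar\lambda^k=\max\{\lambda^k+\frac{1}{\eta_k s_k}\Phi(\bar x^k),0\}$ componentwise); $\bar w^k=(\bar x^k,\bar\lambda^k)$; and $w^{k+1}=w^k-M_k(w^k-\bar w^k)$ where $M_k=\begin{pmatrix}I_n & -\frac{1}{\eta_k r_k}\mathcal{D}\Phi(\bar x^k)^\top\\ 0 & I_p\end{pmatrix}$. It is assumed throughout that $\mathsf{R}(x^k)>0$ and $\mathsf{R}(\bar x^k)>0$ for all $k$. Define $Q_k=\begin{pmatrix} r_kI_n & -\frac{1}{\eta_k}\mathcal{D}\Phi(\bar x^k)^\top\\ 0 & s_kI_p\end{pmatrix}$, $H_k=\begin{pmatrix} r_kI_n&0\\0&s_kI_p\end{pmatrix}$, $G_k=\begin{pmatrix} r_kI_n&0\\0&s_kI_p-\frac{1}{\eta_k^2r_k}\mathcal{D}\Phi(\bar x^k)\mathcal{D}\Phi(\bar x^k)^\top\end{pmatrix}$. *)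

From HB Require Import structures.
From mathcomp Require Import all_boot all_order all_algebra.
From mathcomp Require Import all_classical all_reals all_analysis.
Set Implicit Arguments. Unset Strict Implicit. Unset Printing Implicit Defensive.
Import Order.TTheory GRing.Theory Num.Theory.
Import numFieldNormedType.Exports.
Local Open Scope classical_set_scope.
Local Open Scope ring_scope.

Section SpiceDefs.
Variable R : realType.

Definition sqnorm m (v : 'cV[R]_m) : R := (v^T *m v) 0 0.
Definition enorm m (v : 'cV[R]_m) : R := Num.sqrt (sqnorm v).
Definition anorm2 m (A : 'M[R]_m) (v : 'cV[R]_m) : R := (v^T *m A *m v) 0 0.
Definition specnorm p n (A : 'M[R]_(p, n)) : R :=
  sup [set enorm (A *m v) | v in [set v : 'cV[R]_n | enorm v = 1]].
(* R(x) := ||D Phi(x)||^2, here as a function of the Jacobian matrix *)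
Definition RR p n (A : 'M[R]_(p, n)) : R := specnorm A ^+ 2.

Definition cvx_set n (X : set 'cV[R]_n) : Prop :=
  forall x y t, X x -> X y -> 0 <= t <= 1 -> X (t *: x + (1 - t) *: y).
Definition convex_fun n (g : 'cV[R]_n -> R) : Prop :=
  forall x y t, 0 <= t <= 1 -> g (t *: x + (1 - t) *: y) <= t * g x + (1 - t) * g y.

Definition nonneg_orthant p : set 'cV[R]_p := [set l | forall i, 0 <= l i 0].

Definition lagr n p (f : 'cV[R]_n -> R) (Phi : 'cV[R]_n -> 'cV[R]_p)
  (x : 'cV[R]_n) (lam : 'cV[R]_p) (rho eta : R) : R :=
  rho * f x + eta^-1 * (lam^T *m Phi x) 0 0.

Definition Gam n p (Phi : 'cV[R]_n -> 'cV[R]_p) (DPhi : 'cV[R]_n -> 'M[R]_(p, n))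
  (x : 'cV[R]_n) (lam : 'cV[R]_p) : 'cV[R]_(n + p) :=
  col_mx ((DPhi x)^T *m lam) (- Phi x).

Definition r_k n p (DPhi : 'cV[R]_n -> 'M[R]_(p, n)) (eta : nat -> R)
  (x : nat -> 'cV[R]_n) (k : nat) : R :=
  (eta k)^-1 * Num.sqrt (RR (DPhi (x k))).
Definition s_k n p (DPhi : 'cV[R]_n -> 'M[R]_(p, n)) (mu : R) (eta : nat -> R)
  (x xb : nat -> 'cV[R]_n) (k : nat) : R :=
  mu * RR (DPhi (xb k)) / (eta k * Num.sqrt (RR (DPhi (x k)))).

Definition H_k n p (DPhi : 'cV[R]_n -> 'M[R]_(p, n)) (mu : R) (eta : nat -> R)
  (x xb : nat -> 'cV[R]_n) (k : nat) : 'M[R]_(n + p) :=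
  block_mx ((r_k DPhi eta x k)%:M) 0 0 ((s_k DPhi mu eta x xb k)%:M).

Definition M_k n p (DPhi : 'cV[R]_n -> 'M[R]_(p, n)) (eta : nat -> R)
  (x xb : nat -> 'cV[R]_n) (k : nat) : 'M[R]_(n + p) :=
  block_mx 1%:M (- ((eta k * r_k DPhi eta x k)^-1 *: (DPhi (xb k))^T)) 0 1%:M.

Definition loewner_le m (A B : 'M[R]_m) : Prop :=
  forall v : 'cV[R]_m, anorm2 A v <= anorm2 B v.

End SpiceDefs.

From HB Require Import structures.
From mathcomp Require Import all_boot all_order all_algebra.
From mathcomp Require Import all_classical all_reals all_analysis.
From mathcomp Require Import ring lra.
Import Order.TTheory GRing.Theory Num.Theory.
Import numFieldNormedType.Exports.
Local Open Scope classical_set_scope.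
Local Open Scope ring_scope.
Set Implicit Arguments. Unset Strict Implicit. Unset Printing Implicit Defensive.
(* Part (i) is arithmetic on the scaling rule, since r_k and s_k are products
   of powers of eta_k, R(x^k) and R(xb^k).  For part (ii), the first-order
   conditions of the two proximal subproblems, the variational inequality at
   w* and the monotonicity of Gamma (convexity of the phi_i) combine into
     eta_k^-1 <xb - x*, DPhi(xb)^T (lam - lamb)>
       <= r_k <xb - x*, x - xb> + s_k <lamb - lam*, lam - lamb>.
   With |DPhi(xb)^T b|^2 <= R(xb) |b|^2 and mu > 1 this expands into
   |w^{k+1} - w*|_{H_k} <= |w^k - w*|_{H_k}, and H_{k+1} <= H_k makes these
   one-step estimates telescope. *)

Section InnerProduct.
Variable R : realType.

Definition dot m (u v : 'cV[R]_m) : R := (u^T *m v) 0 0.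

Lemma dotE m (u v : 'cV[R]_m) : dot u v = \sum_i u i 0 * v i 0.
Proof. by rewrite /dot mxE; apply: eq_bigr => i _; rewrite mxE. Qed.

Lemma dotC m (u v : 'cV[R]_m) : dot u v = dot v u.
Proof. by rewrite !dotE; apply: eq_bigr => i _; rewrite mulrC. Qed.

Lemma dotDl m (u v w : 'cV[R]_m) : dot (u + v) w = dot u w + dot v w.
Proof. by rewrite !dotE -big_split; apply: eq_bigr => i _; rewrite mxE mulrDl. Qed.

Lemma dotNl m (u w : 'cV[R]_m) : dot (- u) w = - dot u w.
Proof. by rewrite !dotE -sumrN; apply: eq_bigr => i _; rewrite mxE mulNr. Qed.

Lemma dotZl m a (u w : 'cV[R]_m) : dot (a *: u) w = a * dot u w.
Proof. by rewrite !dotE mulr_sumr; apply: eq_bigr => i _; rewrite mxE mulrA. Qed.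

Lemma dotBl m (u v w : 'cV[R]_m) : dot (u - v) w = dot u w - dot v w.
Proof. by rewrite dotDl dotNl. Qed.

Lemma dotDr m (u v w : 'cV[R]_m) : dot w (u + v) = dot w u + dot w v.
Proof. by rewrite dotC dotDl !(dotC w). Qed.

Lemma dotNr m (u w : 'cV[R]_m) : dot w (- u) = - dot w u.
Proof. by rewrite dotC dotNl dotC. Qed.

Lemma dotZr m a (u w : 'cV[R]_m) : dot w (a *: u) = a * dot w u.
Proof. by rewrite dotC dotZl dotC. Qed.

Lemma dotBr m (u v w : 'cV[R]_m) : dot w (u - v) = dot w u - dot w v.
Proof. by rewrite dotDr dotNr. Qed.

Lemma dot_sqrD m (u v : 'cV[R]_m) :
  dot (u + v) (u + v) = dot u u + 2 * dot u v + dot v v.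
Proof. rewrite dotDl !dotDr (dotC v u); ring. Qed.

Lemma dot_mulmx m k (A : 'M[R]_(m, k)) u v : dot u (A *m v) = dot (A^T *m u) v.
Proof. by rewrite /dot trmx_mul trmxK mulmxA. Qed.

Lemma dot_ge0 m (u : 'cV[R]_m) : 0 <= dot u u.
Proof. by rewrite dotE; apply: sumr_ge0 => i _; rewrite -expr2 sqr_ge0. Qed.

Lemma dot_entry_sqr_le m (v : 'cV[R]_m) j : v j 0 ^+ 2 <= dot v v.
Proof.
rewrite dotE (bigD1 j) //= -expr2 lerDl.
by apply: sumr_ge0 => i _; rewrite -expr2 sqr_ge0.
Qed.

Lemma ler_dot_orthant m (l u v : 'cV[R]_m) : nonneg_orthant l ->
  (forall i, u i 0 <= v i 0) -> dot l u <= dot l v.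
Proof. by move=> hl huv; rewrite !dotE; apply: ler_sum => i _; apply: ler_wpM2l. Qed.

Lemma col_mxB m k n (a c : 'M[R]_(m, n)) (b d : 'M[R]_(k, n)) :
  col_mx a b - col_mx c d = col_mx (a - c) (b - d).
Proof. by rewrite opp_col_mx add_col_mx. Qed.

Lemma dot_col_mx m k (a c : 'cV[R]_m) (b d : 'cV[R]_k) :
  ((col_mx a b)^T *m col_mx c d) 0 0 = dot a c + dot b d.
Proof. by rewrite tr_col_mx mul_row_col mxE. Qed.

Lemma anorm2_block_scalar m k (r s : R) (a : 'cV[R]_m) (b : 'cV[R]_k) :
  anorm2 (block_mx r%:M 0 0 s%:M) (col_mx a b) = r * dot a a + s * dot b b.
Proof.
rewrite /anorm2 tr_col_mx mul_row_block !mulmx0 addr0 add0r !mul_mx_scalar.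
by rewrite mul_row_col -!scalemxAl !mxE /dot !mxE.
Qed.

Lemma loewner_le_block_scalar m k (r1 r0 s1 s0 : R) : r1 <= r0 -> s1 <= s0 ->
  loewner_le (block_mx r1%:M 0 0 s1%:M : 'M[R]_(m + k))
             (block_mx r0%:M 0 0 s0%:M).
Proof.
move=> hr hs v; rewrite -(vsubmxK v) !anorm2_block_scalar.
by apply: lerD; apply: ler_wpM2r => //; exact: dot_ge0.
Qed.

End InnerProduct.

Section SpectralNorm.
Variable R : realType.

Lemma enorm_sqr m (v : 'cV[R]_m) : enorm v ^+ 2 = dot v v.
Proof. by rewrite /enorm sqr_sqrtr // dot_ge0. Qed.

Lemma specnorm_ubound p n (A : 'M[R]_(p, n)) :
  has_ubound [set enorm (A *m v) | v in [set v : 'cV[R]_n | enorm v = 1]].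
Proof.
exists (Num.sqrt (\sum_i (\sum_j `|A i j|) ^+ 2)).
move=> _ [w /= hw <-]; rewrite /enorm ler_sqrt; last first.
  by apply: sumr_ge0 => i _; rewrite sqr_ge0.
have ww : dot w w = 1 by rewrite -enorm_sqr hw expr1n.
rewrite /sqnorm -/(dot _ _) dotE; apply: ler_sum => i _.
have wj j : `|w j 0| <= 1.
  have := dot_entry_sqr_le w j; rewrite ww -(real_normK (num_real (w j 0))).
  by have := normr_ge0 (w j 0); nra.
have hi : `|(A *m w) i 0| <= \sum_j `|A i j|.
  rewrite mxE; apply: le_trans (ler_norm_sum _ _ _) _; apply: ler_sum => j _.
  by rewrite normrM ler_piMr.
rewrite -expr2 -(real_normK (num_real ((A *m w) i 0))).
by have := normr_ge0 ((A *m w) i 0); nra.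
Qed.

Lemma enorm_mulmx_le p n (A : 'M[R]_(p, n)) (z : 'cV[R]_n) :
  enorm (A *m z) <= specnorm A * enorm z.
Proof.
have [z0|zn0] := eqVneq (dot z z) 0.
  have -> : z = 0.
    apply/matrixP => i j; rewrite ord1 mxE; apply/eqP.
    by rewrite -sqrf_eq0 eq_le sqr_ge0 andbT -z0 dot_entry_sqr_le.
  by rewrite mulmx0 /enorm /sqnorm !mulmx0 mxE sqrtr0 mulr0.
have nz0 : 0 < enorm z by rewrite sqrtr_gt0 lt0r zn0 dot_ge0.
set v := (enorm z)^-1 *: z.
have hv : enorm v = 1.
  rewrite /enorm /sqnorm -/(dot v v) /v dotZl dotZr mulrA -expr2 exprVn enorm_sqr.
  by rewrite mulVf ?sqrtr1 // gt_eqF.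
have hAv : enorm (A *m v) = (enorm z)^-1 * enorm (A *m z).
  rewrite /v -scalemxAr /enorm /sqnorm -!/(dot _ _) dotZl dotZr mulrA -expr2.
  by rewrite sqrtrM ?sqr_ge0 // sqrtr_sqr ger0_norm // invr_ge0 ltW.
have Sv : [set enorm (A *m v) | v in [set v : 'cV[R]_n | enorm v = 1]] (enorm (A *m v)).
  by exists v.
have := sup_upper_bound (conj (ex_intro _ _ Sv) (specnorm_ubound A)) Sv.
by rewrite -/(specnorm A) hAv ler_pdivrMl // mulrC.
Qed.

(* Expand 0 <= |R(A) u - A A^T u|^2 and use |A z|^2 <= R(A) |z|^2 for z = A^T u. *)
Lemma dot_trmx_mulmx_le p n (A : 'M[R]_(p, n)) (u : 'cV[R]_p) :
  0 < RR A -> dot (A^T *m u) (A^T *m u) <= RR A * dot u u.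
Proof.
move=> hR; set z := A^T *m u; set S := RR A.
have hAz : dot (A *m z) (A *m z) <= S * dot z z.
  have h0 : 0 <= enorm (A *m z) by apply: sqrtr_ge0.
  rewrite -!enorm_sqr /S /RR -exprMn.
  by apply: lerXn2r; rewrite ?nnegrE //; apply: le_trans (enorm_mulmx_le A z).
have hz : dot z z = dot u (A *m z) by rewrite dot_mulmx.
have h0 := dot_ge0 (S *: u - A *m z).
rewrite dotBl !dotBr !dotZl !dotZr (dotC (A *m z) u) in h0.
have hz0 := dot_ge0 z.
have : S * dot z z <= S * (S * dot u u) by nra.
by rewrite ler_pM2l.
Qed.

End SpectralNorm.

Section FirstOrderConditions.
Variable R : realType.

Lemma cvg_at_right_ge0 (h : R -> R) l : h t @[t --> 0^'+] --> l ->
  (forall t, 0 < t <= 1 -> 0 <= h t) -> 0 <= l.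
Proof.
move=> hl hp; apply: (cvgr_to_ge hl).
near=> t; apply: hp; apply/andP; split; near: t; first exact: nbhs_right_gt.
exact: nbhs_right_le.
Unshelve. all: by end_near. Qed.

Lemma cvg_mxentry T (F : set_system T) {FF : Filter F} m k
    (g : T -> 'M[R]_(m, k)) (L : 'M[R]_(m, k)) i j :
  g @ F --> L -> (fun t => g t i j) @ F --> L i j.
Proof. exact: (continuous_cvg _ (@coord_continuous _ _ _ i j L)). Qed.

Lemma cvg_dot T (F : set_system T) {FF : Filter F} m (l : 'cV[R]_m)
    (G : T -> 'cV[R]_m) (L : 'cV[R]_m) :
  G @ F --> L -> (fun t => dot l (G t)) @ F --> dot l L.
Proof.
move=> hG; rewrite dotE; under eq_cvg do rewrite dotE.
apply: (@cvg_big R 'I_m +%R 0 xpredT _ _ _ _ (fun i t => l i 0 * G t i 0)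
  (fun i => l i 0 * L i 0)); first exact: add_continuous.
move=> i _; apply: cvgM; first exact: cvg_cst.
exact: cvg_mxentry.
Qed.

Lemma cvg_dir_quotient n p (Phi : 'cV[R]_n -> 'cV[R]_p) (A : 'M[R]_(p, n)) y d :
  differentiable Phi y -> 'd Phi y d = A *m d ->
  t^-1 *: (Phi (t *: d + y) - Phi y) @[t --> 0^'+] --> A *m d.
Proof.
move=> hd hA; rewrite -hA -deriveE //; apply: cvg_dnbhs_at_right.
exact: (diff_derivable (v := d) hd).
Qed.

Lemma convex_jacobian_le n p (Phi : 'cV[R]_n -> 'cV[R]_p) (A : 'M[R]_(p, n)) y z i :
  (forall i : 'I_p, convex_fun (fun y => Phi y i 0)) ->
  differentiable Phi y -> (forall v, 'd Phi y v = A *m v) ->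
  (A *m (z - y)) i 0 <= Phi z i 0 - Phi y i 0.
Proof.
move=> hphi hd hA.
have hlim := cvg_mxentry (i := i) (j := 0) (cvg_dir_quotient hd (hA (z - y))).
rewrite -subr_ge0; apply: (@cvg_at_right_ge0 (fun t => (Phi z i 0 - Phi y i 0)
  - (t^-1 *: (Phi (t *: (z - y) + y) - Phi y)) i 0)).
  by apply: cvgB; [exact: cvg_cst | exact: hlim].
move=> t /andP[t0 t1] /=.
have -> : t *: (z - y) + y = t *: z + (1 - t) *: y.
  by apply/matrixP => a b; rewrite !mxE; ring.
have hc : Phi (t *: z + (1 - t) *: y) i 0 - Phi y i 0 <= t * (Phi z i 0 - Phi y i 0).
  by have := hphi i z y t; rewrite /= (ltW t0) t1 => /(_ isT); lra.
by rewrite !mxE subr_ge0 ler_pdivrMl.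
Qed.

Lemma dot_convex_jacobian_le n p (Phi : 'cV[R]_n -> 'cV[R]_p) (A : 'M[R]_(p, n))
    (l : 'cV[R]_p) y z :
  (forall i : 'I_p, convex_fun (fun y => Phi y i 0)) ->
  differentiable Phi y -> (forall v, 'd Phi y v = A *m v) -> nonneg_orthant l ->
  dot l (A *m (z - y)) <= dot l (Phi z - Phi y).
Proof.
move=> hphi hd hA hl; apply: ler_dot_orthant => // i.
apply: le_trans (convex_jacobian_le z i hphi hd hA) _.
by rewrite !mxE.
Qed.

End FirstOrderConditions.

Section Optimality.
Variable R : realType.

Lemma Gam_monotone n p (Phi : 'cV[R]_n -> 'cV[R]_p) (DPhi : 'cV[R]_n -> 'M[R]_(p, n))
    (x1 x2 : 'cV[R]_n) (l1 l2 : 'cV[R]_p) :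
  (forall i : 'I_p, convex_fun (fun y => Phi y i 0)) ->
  (forall y, differentiable Phi y) -> (forall y v, 'd Phi y v = DPhi y *m v) ->
  nonneg_orthant l1 -> nonneg_orthant l2 ->
  0 <= ((col_mx x1 l1 - col_mx x2 l2)^T
        *m (Gam Phi DPhi x1 l1 - Gam Phi DPhi x2 l2)) 0 0.
Proof.
move=> hphi hd hj hl1 hl2.
have h1 := dot_convex_jacobian_le x2 hphi (hd x1) (hj x1) hl1.
have h2 := dot_convex_jacobian_le x1 hphi (hd x2) (hj x2) hl2.
rewrite !dot_mulmx !dotBr !(dotC (_^T *m _)) in h1 h2.
rewrite /Gam !col_mxB dot_col_mx !(dotDr, dotNr, dotBl, opprK).
lra.
Qed.

Lemma Gam_vi_monotone n p (f : 'cV[R]_n -> R) (Phi : 'cV[R]_n -> 'cV[R]_p)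
    (DPhi : 'cV[R]_n -> 'M[R]_(p, n)) (xs y : 'cV[R]_n) (ls l : 'cV[R]_p) (rho c : R) :
  (forall i : 'I_p, convex_fun (fun y => Phi y i 0)) ->
  (forall y, differentiable Phi y) -> (forall y v, 'd Phi y v = DPhi y *m v) ->
  0 <= c -> nonneg_orthant l -> nonneg_orthant ls ->
  0 <= rho * (f y - f xs)
       + ((col_mx y l - col_mx xs ls)^T *m (c *: Gam Phi DPhi xs ls)) 0 0 ->
  0 <= rho * (f y - f xs) + c * ((col_mx y l - col_mx xs ls)^T *m Gam Phi DPhi y l) 0 0.
Proof.
move=> hphi hd hj c0 hl hls.
have := mulr_ge0 c0 (Gam_monotone y xs hphi hd hj hl hls).
rewrite -scalemxAr mulmxBr; set u := (_ - _)^T.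
set P := u *m Gam Phi DPhi y l; set Ps := u *m Gam Phi DPhi xs ls.
rewrite !mxE; lra.
Qed.

Lemma prox_argmin_first_order n p (X : set 'cV[R]_n) (f : 'cV[R]_n -> R)
    (Phi : 'cV[R]_n -> 'cV[R]_p) (A : 'M[R]_(p, n)) (lam : 'cV[R]_p)
    (x xb : 'cV[R]_n) (rho eta r : R) :
  cvx_set X -> convex_fun f ->
  differentiable Phi xb -> (forall v, 'd Phi xb v = A *m v) -> 0 <= rho -> X xb ->
  (forall y, X y ->
     lagr f Phi xb lam rho eta + r / 2 * sqnorm (xb - x)
     <= lagr f Phi y lam rho eta + r / 2 * sqnorm (y - x)) ->
  forall y, X y ->
  0 <= rho * (f y - f xb) + eta^-1 * dot lam (A *m (y - xb)) + r * dot (y - xb) (xb - x).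
Proof.
move=> hX hf hd hA rho0 hXb hmin y hy.
set d := y - xb; set K := rho * (f y - f xb) + r * dot d (xb - x).
pose h t := K + eta^-1 * dot lam (t^-1 *: (Phi (t *: d + xb) - Phi xb))
            + r / 2 * dot d d * t.
have hlim : h t @[t --> 0^'+] --> K + eta^-1 * dot lam (A *m d) + r / 2 * dot d d * 0.
  apply: cvgD; last by apply: cvgM; [exact: cvg_cst | exact: cvg_at_right_filter cvg_id].
  apply: cvgD; first exact: cvg_cst.
  by apply: cvgM; [exact: cvg_cst | exact: cvg_dot (cvg_dir_quotient hd (hA d))].
suff : 0 <= K + eta^-1 * dot lam (A *m d) by rewrite /K; lra.
rewrite -[X in _ <= X]addr0 -[X in _ + X](mulr0 (r / 2 * dot d d)).
apply: (cvg_at_right_ge0 hlim) => t /andP[t0 t1].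
have yt : t *: d + xb = t *: y + (1 - t) *: xb.
  by apply/matrixP => a b; rewrite !mxE; ring.
have hfc : rho * f (t *: d + xb) <= rho * (t * f y + (1 - t) * f xb).
  by rewrite yt; apply: ler_wpM2l => //; apply: hf; rewrite (ltW t0) t1.
have Xyt : X (t *: d + xb) by rewrite yt; apply: hX => //; rewrite (ltW t0) t1.
have hm := hmin _ Xyt.
have shift : t *: d + xb - x = (xb - x) + t *: d.
  by apply/matrixP => a b; rewrite !mxE; ring.
rewrite /lagr /sqnorm -!/(dot _ _) shift (dot_sqrD (xb - x)) !dotZl !dotZr in hm.
set W := dot lam (Phi (t *: d + xb)) - dot lam (Phi xb).
rewrite -(pmulr_rge0 _ t0) /h /K dotZr (dotBr _ _ lam) -/W.
set E := eta^-1 in hm *.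
have -> : t * (rho * (f y - f xb) + r * dot d (xb - x) + E * (t^-1 * W)
             + r / 2 * dot d d * t)
          = t * (rho * (f y - f xb)) + t * (r * dot d (xb - x)) + E * W
            + r / 2 * dot d d * t ^+ 2.
  by field; rewrite gt_eqF.
rewrite /W (dotC d); lra.
Qed.

Lemma prox_argmax_orthant_vi n p (f : 'cV[R]_n -> R) (Phi : 'cV[R]_n -> 'cV[R]_p)
    (xb : 'cV[R]_n) (lam lamb : 'cV[R]_p) (rho eta s : R) :
  nonneg_orthant lamb ->
  (forall l, nonneg_orthant l ->
     lagr f Phi xb l rho eta - s / 2 * sqnorm (l - lam)
     <= lagr f Phi xb lamb rho eta - s / 2 * sqnorm (lamb - lam)) ->
  forall l, nonneg_orthant l ->
  eta^-1 * dot (l - lamb) (Phi xb) - s * dot (l - lamb) (lamb - lam) <= 0.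
Proof.
move=> hlb hmax l hl.
set dl := l - lamb; set V := eta^-1 * dot dl (Phi xb) - s * dot dl (lamb - lam).
rewrite -oppr_ge0.
have hlim : s / 2 * dot dl dl * t - V @[t --> 0^'+] --> s / 2 * dot dl dl * 0 - V.
  apply: cvgB; last exact: cvg_cst.
  by apply: cvgM; [exact: cvg_cst | exact: cvg_at_right_filter cvg_id].
rewrite -[X in _ <= X]add0r -[X in X + _](mulr0 (s / 2 * dot dl dl)).
apply: (cvg_at_right_ge0 hlim) => t /andP[t0 t1].
have hlt : nonneg_orthant (lamb + t *: dl).
  by move=> i; rewrite /dl !mxE; have := hlb i; have := hl i; nra.
have hm := hmax _ hlt.
have shift : lamb + t *: dl - lam = (lamb - lam) + t *: dl.
  by apply/matrixP => a b; rewrite !mxE; ring.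
rewrite /lagr /sqnorm -!/(dot _ _) shift (dot_sqrD (lamb - lam)) in hm.
rewrite !dotZl !dotZr dotDl dotZl in hm.
rewrite -(pmulr_rge0 _ t0) /V (dotC dl (lamb - lam)); lra.
Qed.

End Optimality.

Section CorrectionStep.
Variable R : realType.

Lemma correction_stepE m k (A : 'M[R]_(k, m)) (c : R) (x xb x' : 'cV[R]_m)
    (l lb l' : 'cV[R]_k) :
  col_mx x' l' = col_mx x l
    - block_mx 1%:M (- (c *: A^T)) 0 1%:M *m (col_mx x l - col_mx xb lb) ->
  x' = xb + c *: (A^T *m (l - lb)) /\ l' = lb.
Proof.
rewrite col_mxB mul_block_col !mul1mx mul0mx add0r mulNmx -scalemxAl col_mxB.
case/eq_col_mx => -> ->; split; apply/matrixP => i j; rewrite !mxE; ring.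
Qed.

Lemma sqr_contraction m q (e a Db : 'cV[R]_m) (g b : 'cV[R]_q) (r s c : R) :
  0 <= r -> r * c ^+ 2 * dot Db Db <= s * dot b b ->
  r * c * dot e Db <= r * dot e a + s * dot g b ->
  r * dot (e + c *: Db) (e + c *: Db) + s * dot g g
  <= r * dot (e + a) (e + a) + s * dot (g + b) (g + b).
Proof.
move=> r0 hDb hcross; have ha := mulr_ge0 r0 (dot_ge0 a).
rewrite !dot_sqrD !dotZl !dotZr; nra.
Qed.

End CorrectionStep.

Section SpiceIteration.
Variables (R : realType) (n p : nat) (X : set 'cV[R]_n) (f : 'cV[R]_n -> R).
Variables (Phi : 'cV[R]_n -> 'cV[R]_p) (DPhi : 'cV[R]_n -> 'M[R]_(p, n)).
Variables (rho mu : R) (eta : nat -> R).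
Variables (x xb : nat -> 'cV[R]_n) (lam lamb : nat -> 'cV[R]_p).

Hypothesis hXcv : cvx_set X.
Hypothesis hf : convex_fun f.
Hypothesis hphi : forall i : 'I_p, convex_fun (fun y => Phi y i 0).
Hypothesis hdiff : forall y : 'cV[R]_n, differentiable Phi y.
Hypothesis hjac : forall (y v : 'cV[R]_n), 'd Phi y v = DPhi y *m v.
Hypothesis hrho : 0 < rho.
Hypothesis hmu : 1 < mu.
Hypothesis heta : forall k, 0 < eta k.
Hypothesis hRx : forall k, 0 < RR (DPhi (x k)).
Hypothesis hRxb : forall k, 0 < RR (DPhi (xb k)).
Hypothesis hxb : forall k, X (xb k) /\
  forall y, X y ->
    lagr f Phi (xb k) (lam k) rho (eta k) + r_k DPhi eta x k / 2 * sqnorm (xb k - x k)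
    <= lagr f Phi y (lam k) rho (eta k) + r_k DPhi eta x k / 2 * sqnorm (y - x k).
Hypothesis hlb : forall k, nonneg_orthant (lamb k) /\
  forall l, nonneg_orthant l ->
    lagr f Phi (xb k) l rho (eta k) - s_k DPhi mu eta x xb k / 2 * sqnorm (l - lam k)
    <= lagr f Phi (xb k) (lamb k) rho (eta k)
       - s_k DPhi mu eta x xb k / 2 * sqnorm (lamb k - lam k).
Hypothesis hupd : forall k, col_mx (x k.+1) (lam k.+1)
  = col_mx (x k) (lam k)
    - M_k DPhi eta x xb k *m (col_mx (x k) (lam k) - col_mx (xb k) (lamb k)).
Hypothesis hetak : forall k,
  Num.max (eta k * Num.sqrt (RR (DPhi (x k.+1)) / RR (DPhi (x k))))
          (eta k * (RR (DPhi (xb k.+1)) * Num.sqrt (RR (DPhi (x k))))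
                 / (RR (DPhi (xb k)) * Num.sqrt (RR (DPhi (x k.+1)))))
  <= eta k.+1.

Definition scaled_vi j (xs : 'cV[R]_n) (ls : 'cV[R]_p) :=
  forall y l, X y -> nonneg_orthant l ->
    0 <= rho * (f y - f xs)
         + ((col_mx y l - col_mx xs ls)^T *m ((eta j)^-1 *: Gam Phi DPhi xs ls)) 0 0.

Lemma r_k_gt0 k : 0 < r_k DPhi eta x k.
Proof. by rewrite /r_k mulr_gt0 ?invr_gt0 ?sqrtr_gt0. Qed.

Lemma r_k_succ_le k : r_k DPhi eta x k.+1 <= r_k DPhi eta x k.
Proof.
have := hetak k; rewrite ge_max /r_k => /andP[h _].
rewrite (sqrtrM _ (ltW (hRx _))) (sqrtrV (ltW (hRx _))) mulrA in h.
rewrite ler_pdivrMr ?sqrtr_gt0 // in h.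
by rewrite ler_pdivrMl // mulrCA ler_pdivlMl.
Qed.

Lemma s_k_succ_le k : s_k DPhi mu eta x xb k.+1 <= s_k DPhi mu eta x xb k.
Proof.
have := hetak k; rewrite ge_max /s_k => /andP[_].
set a0 := Num.sqrt (RR (DPhi (x k))); set a1 := Num.sqrt (RR (DPhi (x k.+1))).
set B0 := RR (DPhi (xb k)); set B1 := RR (DPhi (xb k.+1)).
have a0p : 0 < a0 by rewrite sqrtr_gt0.
have a1p : 0 < a1 by rewrite sqrtr_gt0.
rewrite ler_pdivrMr ?(mulr_gt0 (hRxb k) a1p) // => h.
rewrite ler_pdivrMr ?(mulr_gt0 (heta k.+1) a1p) // mulrAC.
rewrite ler_pdivlMr ?(mulr_gt0 (heta k) a0p) //.
have -> : mu * B1 * (eta k * a0) = mu * (eta k * (B1 * a0)) by ring.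
have -> : mu * B0 * (eta k.+1 * a1) = mu * (eta k.+1 * (B0 * a1)) by ring.
by rewrite ler_wpM2l // ltW // (lt_trans ltr01).
Qed.

Lemma H_k_succ_loewner k :
  loewner_le (H_k DPhi mu eta x xb k.+1) (H_k DPhi mu eta x xb k).
Proof. exact: loewner_le_block_scalar (r_k_succ_le k) (s_k_succ_le k). Qed.

(* [r_k c_k^2 = 1 / (eta_k sqrt R(x^k)) = s_k / (mu R(xb^k))], so [mu > 1] leaves room. *)
Lemma correction_norm_le k (b : 'cV[R]_p) :
  r_k DPhi eta x k * (eta k * r_k DPhi eta x k)^-1 ^+ 2
    * dot ((DPhi (xb k))^T *m b) ((DPhi (xb k))^T *m b)
  <= s_k DPhi mu eta x xb k * dot b b.
Proof.
set c := (eta k * _)^-1; set a := Num.sqrt (RR (DPhi (x k))); set B := RR (DPhi (xb k)).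
have a0 : 0 < a by rewrite sqrtr_gt0.
have hc : r_k DPhi eta x k * c ^+ 2 = (eta k * a)^-1.
  by rewrite /c /r_k -/a; field; rewrite !gt_eqF.
have K0 : 0 < (eta k * a)^-1 by rewrite invr_gt0 mulr_gt0.
rewrite hc /s_k -/a -/B.
apply: le_trans (ler_wpM2l (ltW K0) (dot_trmx_mulmx_le b (hRxb k))) _.
have -> : mu * B / (eta k * a) * dot b b = mu * ((eta k * a)^-1 * (B * dot b b)) by ring.
rewrite -/B ler_peMl ?(ltW hmu) //.
exact: mulr_ge0 (ltW K0) (mulr_ge0 (ltW (hRxb k)) (dot_ge0 b)).
Qed.

Lemma cross_term_le k xs ls : X xs -> nonneg_orthant ls -> scaled_vi k xs ls ->
  (eta k)^-1 * dot (xb k - xs) ((DPhi (xb k))^T *m (lam k - lamb k))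
  <= r_k DPhi eta x k * dot (xb k - xs) (x k - xb k)
     + s_k DPhi mu eta x xb k * dot (lamb k - ls) (lam k - lamb k).
Proof.
move=> hxs hls hvi.
have [hxbX hxbmin] := hxb k; have [hlbZ hlbmax] := hlb k.
have hP := prox_argmin_first_order hXcv hf (hdiff _) (hjac _) (ltW hrho) hxbX hxbmin hxs.
have hD := prox_argmax_orthant_vi hlbZ hlbmax hls.
have ei0 : 0 <= (eta k)^-1 by rewrite invr_ge0 ltW.
have hV := Gam_vi_monotone hphi hdiff hjac ei0 hlbZ hls (hvi _ _ hxbX hlbZ).
rewrite /Gam col_mxB dot_col_mx in hV.
rewrite dot_mulmx (dotC _ (_ - _)) in hP.
rewrite mulmxBr !(dotBl, dotBr, dotNr) in hP hD hV *.
lra.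
Qed.

Lemma H_k_norm_step_le k xs ls : X xs -> nonneg_orthant ls -> scaled_vi k xs ls ->
  anorm2 (H_k DPhi mu eta x xb k) (col_mx (x k.+1) (lam k.+1) - col_mx xs ls)
  <= anorm2 (H_k DPhi mu eta x xb k) (col_mx (x k) (lam k) - col_mx xs ls).
Proof.
move=> hxs hls hvi; have [-> ->] := correction_stepE (hupd k).
rewrite !col_mxB !anorm2_block_scalar.
set c := (eta k * _)^-1; set Db := (DPhi (xb k))^T *m _.
have -> : xb k + c *: Db - xs = (xb k - xs) + c *: Db by rewrite addrAC.
have -> : x k - xs = (xb k - xs) + (x k - xb k) by rewrite [RHS]addrC addrA subrK.
have -> : lam k - ls = (lamb k - ls) + (lam k - lamb k) by rewrite [RHS]addrC addrA subrK.
apply: sqr_contraction; first exact: ltW (r_k_gt0 k).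
  exact: correction_norm_le.
have -> : r_k DPhi eta x k * c = (eta k)^-1.
  by rewrite /c invfM mulrCA mulfV ?mulr1 // gt_eqF ?r_k_gt0.
exact: cross_term_le.
Qed.

Lemma H_k_norm_succ_le k xs ls : X xs -> nonneg_orthant ls -> scaled_vi k xs ls ->
  anorm2 (H_k DPhi mu eta x xb k.+1) (col_mx (x k.+1) (lam k.+1) - col_mx xs ls)
  <= anorm2 (H_k DPhi mu eta x xb k) (col_mx (x k) (lam k) - col_mx xs ls).
Proof.
move=> hxs hls hvi.
exact: le_trans (H_k_succ_loewner k _) (H_k_norm_step_le hxs hls hvi).
Qed.

Lemma H_k_norm_le_init xs ls k : X xs -> nonneg_orthant ls ->
  (forall j, (j <= k)%N -> scaled_vi j xs ls) ->
  anorm2 (H_k DPhi mu eta x xb k.+1) (col_mx (x k.+1) (lam k.+1) - col_mx xs ls)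
  <= anorm2 (H_k DPhi mu eta x xb 0) (col_mx (x 0) (lam 0) - col_mx xs ls).
Proof.
move=> hxs hls; elim: k => [|k IH] hvi; first exact: H_k_norm_succ_le (hvi 0%N _).
apply: le_trans (H_k_norm_succ_le hxs hls (hvi _ _)) (IH _) => // j hj.
by apply: hvi; rewrite ltnW.
Qed.

End SpiceIteration.

Theorem lemma3p3 (R : realType) (n p : nat)
  (X : set 'cV[R]_n) (f : 'cV[R]_n -> R)
  (Phi : 'cV[R]_n -> 'cV[R]_p) (DPhi : 'cV[R]_n -> 'M[R]_(p, n))
  (rho mu : R) (eta : nat -> R)
  (x xb : nat -> 'cV[R]_n) (lam lamb : nat -> 'cV[R]_p)
  (hXne : X !=set0) (hXcl : closed X) (hXcv : cvx_set X)
  (hf : convex_fun f)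
  (hphi : forall i : 'I_p, convex_fun (fun y => Phi y i 0))
  (hdiff : forall y : 'cV[R]_n, differentiable Phi y)
  (hjac : forall (y v : 'cV[R]_n), 'd Phi y v = DPhi y *m v)
  (hDc : continuous DPhi)
  (hrho : 0 < rho) (hmu : 1 < mu) (heta : forall k, 0 < eta k)
  (hRx : forall k, 0 < RR (DPhi (x k)))
  (hRxb : forall k, 0 < RR (DPhi (xb k)))
  (hxX : forall k, X (x k)) (hlZ : forall k, nonneg_orthant (lam k))
  (hxb : forall k, X (xb k) /\
     forall y, X y ->
       lagr f Phi (xb k) (lam k) rho (eta k)
         + r_k DPhi eta x k / 2 * sqnorm (xb k - x k)
       <= lagr f Phi y (lam k) rho (eta k)
         + r_k DPhi eta x k / 2 * sqnorm (y - x k))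
  (hlb : forall k, nonneg_orthant (lamb k) /\
     forall l, nonneg_orthant l ->
       lagr f Phi (xb k) l rho (eta k)
         - s_k DPhi mu eta x xb k / 2 * sqnorm (l - lam k)
       <= lagr f Phi (xb k) (lamb k) rho (eta k)
         - s_k DPhi mu eta x xb k / 2 * sqnorm (lamb k - lam k))
  (hupd : forall k, col_mx (x k.+1) (lam k.+1)
     = col_mx (x k) (lam k)
       - M_k DPhi eta x xb k *m (col_mx (x k) (lam k) - col_mx (xb k) (lamb k)))
  (hetak : forall k,
     Num.max (eta k * Num.sqrt (RR (DPhi (x k.+1)) / RR (DPhi (x k))))
             (eta k * (RR (DPhi (xb k.+1)) * Num.sqrt (RR (DPhi (x k))))
                    / (RR (DPhi (xb k)) * Num.sqrt (RR (DPhi (x k.+1)))))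
     <= eta k.+1) :
  (forall k,
     r_k DPhi eta x k.+1 <= r_k DPhi eta x k /\
     s_k DPhi mu eta x xb k.+1 <= s_k DPhi mu eta x xb k /\
     loewner_le (H_k DPhi mu eta x xb k.+1) (H_k DPhi mu eta x xb k)) /\
  (forall (xs : 'cV[R]_n) (ls : 'cV[R]_p) (k : nat),
     X xs -> nonneg_orthant ls ->
     (forall j, (j <= k)%N ->
        forall (y : 'cV[R]_n) (l : 'cV[R]_p), X y -> nonneg_orthant l ->
          0 <= rho * (f y - f xs)
               + ((col_mx y l - col_mx xs ls)^T
                  *m ((eta j)^-1 *: Gam Phi DPhi xs ls)) 0 0) ->
     anorm2 (H_k DPhi mu eta x xb k.+1) (col_mx (x k.+1) (lam k.+1) - col_mx xs ls)
     <= anorm2 (H_k DPhi mu eta x xb 0) (col_mx (x 0) (lam 0) - col_mx xs ls)).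
Proof.
split=> [k | xs ls k hxs hls hvi].
  split; first exact: r_k_succ_le.
  split; first exact: s_k_succ_le.
  exact: H_k_succ_loewner.
exact: (H_k_norm_le_init hXcv hf hphi hdiff hjac hrho hmu heta hRx hRxb hxb hlb hupd
  hetak hxs hls hvi).
Qed.
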